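(* Let $F=G/H=G^{\mathbb C}/P$ be a (pseudo-Riemannian) flag manifold and let $J,J'$ be two $G$-invariant complex structures on $F$. Then all Koszul numbers of $J$ are even if and only if all Koszul numbers of $J'$ are even; i.e. divisibility by two of the Koszul numbers does not depend on the invariant complex structure.
   Context: $G$ is a compact connected simply-connected semisimple Lie group, $H$ the centralizer of a torus. Invariant complex structures on $F$ correspond to systems of simple roots $\Pi=\Pi_W\sqcup\Pi_B$ of $\mathfrak g^{\mathbb C}$ with $\Pi_W$ a system of simple roots of the root system $R_H$ of $\mathfrak h^{\mathbb C}$, $\Pi_B=\{\beta_1,\dots,\beta_v\}$. The Koszul form is $\sigma^J=\sum_{\alpha\in R^+\setminus R_H}\alpha=\sum_j k_j\Lambda_j$ with $\Lambda_j$ the fundamental weight of $\beta_j$; the $k_j$ are the Koszul numbers of $J$. *)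

From mathcomp Require Import all_boot all_order all_algebra.
From mathcomp Require Import boolp reals.
Set Implicit Arguments. Unset Strict Implicit. Unset Printing Implicit Defensive.
Import Order.TTheory GRing.Theory Num.Theory.
Local Open Scope ring_scope.

Section RootSystems.
Variables (R : realType) (n : nat).
Implicit Types (u v a b : 'rV[R]_n) (rs S P ts : seq 'rV[R]_n).

(* standard Euclidean inner product on R^n (= h_R^* with the Killing-form
   inner product, after choosing an orthonormal basis) *)
Definition dot u v : R := (u *m v^T) 0 0.

Definition is_intR (x : R) : Prop := exists z : int, x = z%:~R.
Definition is_evenR (x : R) : Prop := exists z : int, x = 2 * z%:~R.

Definition cartan b a : R := 2 * dot b a / dot a a.
Definition refl a b : 'rV[R]_n := b - cartan b a *: a.

(* rs is a reduced crystallographic root system (the root system of a complex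
   semisimple Lie algebra), spanning the whole space (semisimplicity). *)
Definition root_system rs : Prop :=
  [/\ uniq rs /\ 0 \notin rs,
      (forall v : 'rV[R]_n, exists c : 'I_(size rs) -> R,
          v = \sum_(i < size rs) c i *: rs`_i),
      (forall a b, a \in rs -> b \in rs -> refl a b \in rs),
      (forall a b, a \in rs -> b \in rs -> is_intR (cartan b a)) &
      (forall a (c : R), a \in rs -> c *: a \in rs -> c = 1 \/ c = -1)].

Definition nonneg_comb P a : Prop :=
  exists c : 'I_(size P) -> nat, a = \sum_(i < size P) (c i)%:R *: P`_i.

Definition is_base P S : Prop :=
  [/\ {subset P <= S}, free P &
      forall a, a \in S -> nonneg_comb P a \/ nonneg_comb P (- a)].

(* roots of the centralizer H of the torus with Lie algebra spanned by ts:
   the roots vanishing on that torus *)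
Definition rootsH rs ts : seq 'rV[R]_n :=
  [seq a <- rs | all (fun t => dot a t == 0) ts].

(* invariant complex structures <-> bases Pi = Pi_W u Pi_B of R with
   Pi_W = Pi \cap R_H a base of R_H *)
Definition inv_cx_structure rs ts P : Prop :=
  is_base P rs /\ is_base [seq a <- P | a \in rootsH rs ts] (rootsH rs ts).

Definition koszul_form rs ts P : 'rV[R]_n :=
  \sum_(a <- rs | `[< nonneg_comb P a >] && (a \notin rootsH rs ts)) a.

(* Koszul number k_j = coefficient of the fundamental weight Lambda_j of
   beta_j in sigma^J, i.e. <sigma^J, beta_j^vee> *)
Definition koszul_number rs ts P b : R := cartan (koszul_form rs ts P) b.

Definition all_koszul_even rs ts P : Prop :=
  forall b, b \in P -> b \notin rootsH rs ts -> is_evenR (koszul_number rs ts P b).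

End RootSystems.

(** Write [<x, a>] for the Cartan pairing [2 (x, a) / (a, a)], so that the
Koszul numbers of [J] are the [<sigma_J, b>] for [b] in [Pi_B].  For a simple
root [g] of [R_H] the reflection [s_g] permutes the positive roots outside
[R_H], hence fixes [sigma_J] and [<sigma_J, g> = 0]; thus all Koszul numbers of
[J] are even iff [<sigma_J, b>] is even for every simple root [b].  Since
[<x, s_g a> = <x, a> - <x, g> <g, a>] with [<g, a>] an integer, induction on
the height then makes [<sigma_J, a>] even for every root [a].  Finally the
positive roots outside [R_H] for [J] and [J'] agree up to a set [A] of roots
replaced by [-A], so [sigma_J - sigma_J'] is twice the sum of [A] and pairs
evenly with every root. *)

From mathcomp Require Import all_boot all_order all_algebra.
From mathcomp Require Import boolp reals.
From mathcomp Require Import ring zify.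
Set Implicit Arguments. Unset Strict Implicit. Unset Printing Implicit Defensive.
Import Order.TTheory GRing.Theory Num.Theory.
Local Open Scope ring_scope.

Lemma big_uniq_involution (T : eqType) (V : nmodType) (r : seq T) (f : T -> T)
    (p : pred T) (F : T -> V) :
  uniq r -> {in r, forall x, f x \in r} -> {in r, involutive f} ->
  \sum_(x <- r | p x) F x = \sum_(x <- r | p (f x)) F (f x).
Proof.
move=> r_uniq f_r fK; rewrite -(big_map f p F); apply: perm_big.
apply: uniq_perm => //.
  by rewrite map_inj_in_uniq // => x y xr yr fxy; rewrite -(fK x xr) fxy fK.
move=> x; apply/idP/mapP => [xr | [y yr ->]]; last exact: f_r.
by exists (f x); [exact: f_r | rewrite fK].
Qed.

Section EuclideanSpace.
Variables (R : realType) (n : nat).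
Implicit Types (u v w a b g x : 'rV[R]_n).

Lemma dotE u v : dot u v = \sum_j u 0 j * v 0 j.
Proof. by rewrite /dot !mxE; apply: eq_bigr => j _; rewrite mxE. Qed.

Lemma dotC u v : dot u v = dot v u.
Proof. by rewrite !dotE; apply: eq_bigr => j _; rewrite mulrC. Qed.

Lemma dotDl u v w : dot (u + w) v = dot u v + dot w v.
Proof. by rewrite /dot mulmxDl mxE. Qed.

Lemma dotZl (c : R) u v : dot (c *: u) v = c * dot u v.
Proof. by rewrite /dot -scalemxAl mxE. Qed.

Lemma dot0l v : dot 0 v = 0.
Proof. by rewrite /dot mul0mx mxE. Qed.

Lemma dotNl u v : dot (- u) v = - dot u v.
Proof. by rewrite -scaleN1r dotZl mulN1r. Qed.

Lemma dotBl u v w : dot (u - w) v = dot u v - dot w v.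
Proof. by rewrite dotDl dotNl. Qed.

Lemma dotZr (c : R) u v : dot v (c *: u) = c * dot v u.
Proof. by rewrite dotC dotZl dotC. Qed.

Lemma dotNr u v : dot v (- u) = - dot v u.
Proof. by rewrite dotC dotNl dotC. Qed.

Lemma dotBr u v w : dot v (u - w) = dot v u - dot v w.
Proof. by rewrite dotC dotBl !(dotC v). Qed.

Lemma dot_suml (I : Type) (r : seq I) (p : pred I) (F : I -> 'rV[R]_n) v :
  dot (\sum_(i <- r | p i) F i) v = \sum_(i <- r | p i) dot (F i) v.
Proof. by apply: (big_morph (fun x => dot x v)) => [x y|]; rewrite ?dotDl ?dot0l. Qed.

Lemma dot_gt0 u : u != 0 -> 0 < dot u u.
Proof.
have sq_ge0 j : 0 <= u 0 j * u 0 j by rewrite -expr2 sqr_ge0.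
move=> u_neq0; rewrite lt_def dotE sumr_ge0 // andbT.
apply: contra u_neq0; rewrite psumr_eq0 // => /allP u0.
apply/eqP/matrixP => i j; rewrite !mxE (ord1 i).
by have /= := u0 j (mem_index_enum j); rewrite mulf_eq0 orbb => /eqP.
Qed.

Lemma cartanDl u w b : cartan (u + w) b = cartan u b + cartan w b.
Proof. by rewrite /cartan dotDl mulrDr mulrDl. Qed.

Lemma cartanNl u b : cartan (- u) b = - cartan u b.
Proof. by rewrite /cartan dotNl mulrN mulNr. Qed.

Lemma cartanBl u w b : cartan (u - w) b = cartan u b - cartan w b.
Proof. by rewrite cartanDl cartanNl. Qed.

Lemma cartanZl (c : R) u b : cartan (c *: u) b = c * cartan u b.
Proof. by rewrite /cartan dotZl !mulrA [2 * c]mulrC. Qed.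

Lemma cartanNr u b : cartan u (- b) = - cartan u b.
Proof. by rewrite /cartan dotNr dotNl dotNr opprK mulrN mulNr. Qed.

Lemma cartan_suml (I : Type) (r : seq I) (p : pred I) (F : I -> 'rV[R]_n) b :
  cartan (\sum_(i <- r | p i) F i) b = \sum_(i <- r | p i) cartan (F i) b.
Proof. by rewrite /cartan dot_suml mulr_sumr mulr_suml. Qed.

Lemma cartan_id a : a != 0 -> cartan a a = 2.
Proof. by move=> /dot_gt0 /lt0r_neq0 aa_neq0; rewrite /cartan mulfK. Qed.

Lemma refl_id a : a != 0 -> refl a a = - a.
Proof. by move=> a_neq0; rewrite /refl cartan_id // scalerDl scale1r opprD addrA subrr sub0r. Qed.

Lemma reflK g : g != 0 -> involutive (refl g).
Proof.
move=> g_neq0 x; rewrite /refl cartanBl cartanZl cartan_id //.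
have -> : cartan x g - cartan x g * 2 = - cartan x g by ring.
by rewrite scaleNr opprK subrK.
Qed.

Lemma refl_sum (I : Type) (r : seq I) (p : pred I) (F : I -> 'rV[R]_n) g :
  refl g (\sum_(i <- r | p i) F i) = \sum_(i <- r | p i) refl g (F i).
Proof. by rewrite /refl cartan_suml scaler_suml -sumrB. Qed.

Lemma refl_fixed g x : g != 0 -> refl g x = x -> cartan x g = 0.
Proof.
move=> g_neq0 /eqP; rewrite /refl subr_eq addrC -subr_eq subrr eq_sym.
by rewrite scaler_eq0 (negbTE g_neq0) orbF => /eqP.
Qed.

Lemma reflN g x : refl g (- x) = - refl g x.
Proof. by rewrite /refl cartanNl scaleNr opprB opprK addrC. Qed.

(* Uses that [refl g] preserves the norm. *)
Lemma cartan_refl u g x : g != 0 -> x != 0 ->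
  cartan u (refl g x) = cartan u x - cartan u g * cartan g x.
Proof.
move=> /dot_gt0 /lt0r_neq0 gg_neq0 /dot_gt0 /lt0r_neq0 xx_neq0.
have refl_norm : dot (refl g x) (refl g x) = dot x x.
  by rewrite /refl /cartan !(dotBl, dotBr, dotZl, dotZr) (dotC g x); field.
rewrite /cartan refl_norm /refl dotBr dotZr /cartan (dotC g x); field.
by apply/andP.
Qed.

End EuclideanSpace.

Section Parity.
Variable R : realType.
Implicit Types x y : R.

Lemma is_intRD x y : is_intR x -> is_intR y -> is_intR (x + y).
Proof. by move=> [a ->] [b ->]; exists (a + b); rewrite intrD. Qed.

Lemma is_intR_sum (I : Type) (r : seq I) (p : pred I) (F : I -> R) :
  (forall i, p i -> is_intR (F i)) -> is_intR (\sum_(i <- r | p i) F i).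
Proof. by move=> F_int; apply: big_ind => //; [exists 0 | exact: is_intRD]. Qed.

Lemma is_evenR0 : is_evenR (0 : R).
Proof. by exists 0; rewrite mulr0. Qed.

Lemma is_evenRN x : is_evenR x -> is_evenR (- x).
Proof. by move=> [a ->]; exists (- a); rewrite intrN mulrN. Qed.

Lemma is_evenRB x y : is_evenR x -> is_evenR y -> is_evenR (x - y).
Proof. by move=> [a ->] [b ->]; exists (a - b); rewrite intrB mulrBr. Qed.

Lemma is_evenRM x y : is_evenR x -> is_intR y -> is_evenR (x * y).
Proof. by move=> [a ->] [b ->]; exists (a * b); rewrite intrM mulrA. Qed.

Lemma is_evenR_double x : is_intR x -> is_evenR (x + x).
Proof. by move=> [a ->]; exists a; rewrite mulr2n mulrDl mul1r. Qed.

End Parity.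

Section RootSystem.
Variables (R : realType) (n : nat) (rs : seq 'rV[R]_n).
Hypothesis rs_root : root_system rs.
Implicit Types (a b g : 'rV[R]_n) (P : seq 'rV[R]_n).

Local Notation positive P a := `[< nonneg_comb P a >].

Lemma root_uniq : uniq rs.
Proof. by case: rs_root => [[]]. Qed.

Lemma root_neq0 a : a \in rs -> a != 0.
Proof. by case: rs_root => [[_ rs0]] _ _ _ _ ar; apply: contraNneq rs0 => <-. Qed.

Lemma root_refl g a : g \in rs -> a \in rs -> refl g a \in rs.
Proof. by case: rs_root => _ _ rs_refl _ _; apply: rs_refl. Qed.

Lemma root_cartan_int a b : a \in rs -> b \in rs -> is_intR (cartan a b).
Proof. by case: rs_root => _ _ _ rs_int _ ar br; apply: rs_int. Qed.

Lemma rootN a : a \in rs -> - a \in rs.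
Proof. by move=> ar; rewrite -refl_id ?root_refl ?root_neq0. Qed.

Lemma root_scale_nat g (k : nat) : g \in rs -> k%:R *: g \in rs -> k = 1%N.
Proof.
case: rs_root => _ _ _ _ reduced gr /(reduced g _ gr) [/eqP | k_opp].
  by rewrite pnatr_eq1 => /eqP.
by have := ler0n R k; rewrite k_opp ler0N1.
Qed.

Lemma free_coef_inj P (x y : 'I_(size P) -> R) : free P ->
  \sum_(i < size P) x i *: P`_i = \sum_(i < size P) y i *: P`_i ->
  forall i, x i = y i.
Proof.
move=> /(@freeP _ _ _ (in_tuple P)) P_free exy i.
apply/eqP; rewrite -subr_eq0; apply/eqP/(P_free (fun i => x i - y i)).
by under eq_bigr do rewrite scalerBl; rewrite sumrB exy subrr.
Qed.

Lemma nth_sum_delta P (j : 'I_(size P)) :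
  P`_j = \sum_(i < size P) (i == j)%:R *: P`_i.
Proof.
rewrite (bigD1 j) //= eqxx scale1r big1 ?addr0 // => i /negbTE ->.
by rewrite scale0r.
Qed.

Lemma free_nat_comb_eq P (c d : 'I_(size P) -> nat) (x : 'I_(size P) -> R) :
  free P ->
  \sum_(i < size P) ((c i)%:R + (d i)%:R) *: P`_i = \sum_(i < size P) x i *: P`_i ->
  forall i, x i = 0 -> c i = 0%N.
Proof.
move=> P_free ecd i xi0; have := free_coef_inj P_free ecd i.
by rewrite xi0 -natrD => /eqP; rewrite pnatr_eq0 addn_eq0 => /andP [/eqP].
Qed.

Section Base.
Variable P : seq 'rV[R]_n.
Hypothesis P_base : is_base P rs.

Lemma base_sub : {subset P <= rs}.
Proof. by case: P_base. Qed.

Lemma base_free : free P.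
Proof. by case: P_base. Qed.

Lemma nth_base_root (j : 'I_(size P)) : P`_j \in rs.
Proof. by apply: base_sub; apply: mem_nth. Qed.

Lemma nonneg_comb_pos_neg a : a \in rs ->
  nonneg_comb P a -> nonneg_comb P (- a) -> False.
Proof.
move=> ar [c ec] [d ed].
have ecd : \sum_(i < size P) ((c i)%:R + (d i)%:R) *: P`_i =
           \sum_(i < size P) (0 : R) *: P`_i.
  under eq_bigr do rewrite scalerDl.
  by rewrite big_split /= -ec -ed subrr big1 // => i _; rewrite scale0r.
have := root_neq0 ar; rewrite ec big1 ?eqxx // => i _.
by rewrite (free_nat_comb_eq base_free ecd) ?scale0r.
Qed.

Lemma nonneg_combN a : a \in rs ->
  positive P (- a) = ~~ positive P a.
Proof.
move=> ar; have [_ _ /(_ a ar) [] a_sign] := P_base.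
  by rewrite (asboolT a_sign) asboolF // => /(nonneg_comb_pos_neg ar a_sign).
by rewrite (asboolT a_sign) asboolF // => /nonneg_comb_pos_neg; apply.
Qed.

Lemma refl_comb (j : 'I_(size P)) a (c : 'I_(size P) -> R) :
  a = \sum_(i < size P) c i *: P`_i ->
  refl P`_j a = \sum_(i < size P) (c i - cartan a P`_j * (i == j)%:R) *: P`_i.
Proof.
move=> ea; rewrite /refl {1}ea (nth_sum_delta j) scaler_sumr -sumrB.
by apply: eq_bigr => i _; rewrite scalerA scalerBl.
Qed.

(* If [refl P`_j a] were negative, [a] would be a multiple of [P`_j], which
   the reducedness of the root system excludes. *)
Lemma refl_simple_nonneg_comb (j : 'I_(size P)) a (c : 'I_(size P) -> nat) :
  a \in rs -> a = \sum_(i < size P) (c i)%:R *: P`_i -> a != P`_j ->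
  exists c' : 'I_(size P) -> nat,
    refl P`_j a = \sum_(i < size P) (c' i)%:R *: P`_i /\
    forall i, (c' i)%:R = (c i)%:R - cartan a P`_j * (i == j)%:R.
Proof.
move=> ar ea a_neq; set g := P`_j; set k := cartan a g.
have ga_comb := refl_comb j ea.
have [_ _ /(_ _ (root_refl (nth_base_root j) ar))] := P_base.
case=> [[c' ec'] | [d ed]].
  by exists c'; split=> //; apply: free_coef_inj base_free _; rewrite -ec' -ga_comb.
have ecd : \sum_(i < size P) ((c i)%:R + (d i)%:R) *: P`_i =
           \sum_(i < size P) (k * (i == j)%:R) *: P`_i.
  under eq_bigr do rewrite scalerDl.
  under [RHS]eq_bigr do rewrite -scalerA.
  by rewrite big_split /= -ea -ed -scaler_sumr -nth_sum_delta /refl opprB addrC subrK.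
have ea_g : a = (c j)%:R *: g.
  rewrite ea (bigD1 j) //= big1 ?addr0 // => i /negbTE i_neq_j.
  by rewrite (free_nat_comb_eq base_free ecd) ?i_neq_j ?mulr0 ?scale0r.
have cj1 : c j = 1%N by apply: (root_scale_nat (nth_base_root j)); rewrite -ea_g.
by move: a_neq; rewrite ea_g cj1 scale1r eqxx.
Qed.

Lemma nonneg_comb_dot_gt0 a (c : 'I_(size P) -> nat) : a != 0 ->
  a = \sum_(i < size P) (c i)%:R *: P`_i -> exists j : 'I_(size P), 0 < dot a P`_j.
Proof.
move=> a_neq0 ea.
have [j aj | a_le0] := pickP (fun j : 'I_(size P) => 0 < dot a P`_j); first by exists j.
suff : dot a a <= 0 by rewrite leNgt dot_gt0.
rewrite {1}ea dot_suml; apply: sumr_le0 => i _.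
by rewrite dotZl dotC mulr_ge0_le0 // leNgt a_le0.
Qed.

Lemma refl_simple_height a (c : 'I_(size P) -> nat) :
  a \in rs -> a = \sum_(i < size P) (c i)%:R *: P`_i -> a \notin P ->
  exists (j : 'I_(size P)) (c' : 'I_(size P) -> nat),
    refl P`_j a = \sum_(i < size P) (c' i)%:R *: P`_i /\
    (\sum_(i < size P) c' i < \sum_(i < size P) c i)%N.
Proof.
move=> ar ea aP; have [j a_j] := nonneg_comb_dot_gt0 (root_neq0 ar) ea.
have a_neq : a != P`_j by apply: contraNneq aP => ->; apply: mem_nth.
have [c' [ec' c'E]] := refl_simple_nonneg_comb ar ea a_neq.
exists j, c'; split=> //.
have [z ez] := root_cartan_int ar (nth_base_root j).
have z_gt0 : (0 < z)%R.
  rewrite -(ltr0z R) -ez /cartan divr_gt0 ?dot_gt0 ?root_neq0 ?nth_base_root //.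
  by rewrite mulr_gt0.
have height_c' : \sum_(i < size P) (c' i)%:R =
                 \sum_(i < size P) (c i)%:R - cartan a P`_j :> R.
  under eq_bigr do rewrite c'E.
  rewrite sumrB; congr (_ - _).
  rewrite (bigD1 j) //= eqxx mulr1 big1 ?addr0 // => i /negbTE ->.
  by rewrite mulr0.
have : ((\sum_(i < size P) c' i)%:Z + z)%:~R = ((\sum_(i < size P) c i)%:Z)%:~R :> R.
  by rewrite intrD -!pmulrn !natr_sum height_c' -ez subrK.
by move/intr_inj; lia.
Qed.

Lemma base_even_cartan s : (forall b, b \in P -> is_evenR (cartan s b)) ->
  forall a, a \in rs -> is_evenR (cartan s a).
Proof.
move=> sP.
suff pos_even N a (c : 'I_(size P) -> nat) : a \in rs ->
    a = \sum_(i < size P) (c i)%:R *: P`_i ->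
    (\sum_(i < size P) c i < N)%N -> is_evenR (cartan s a).
  move=> a ar; have [_ _ /(_ a ar) [[c ec] | [c ec]]] := P_base.
    exact: (pos_even _ _ c ar ec).
  by rewrite -[a]opprK cartanNr; apply/is_evenRN/(pos_even _ _ c (rootN ar) ec).
elim: N a c => [//|N IH] a c ar ea c_lt.
have [/sP //|aP] := boolP (a \in P).
have [j [c' [ec' c'_lt]]] := refl_simple_height ar ea aP.
have ga := root_refl (nth_base_root j) ar.
have g_neq0 := root_neq0 (nth_base_root j).
rewrite -(reflK g_neq0 a) (cartan_refl _ g_neq0 (root_neq0 ga)).
apply: is_evenRB; first by apply: (IH _ c' ga ec'); lia.
by apply: is_evenRM; [apply/sP/mem_nth | exact: root_cartan_int (nth_base_root j) ga].
Qed.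

Lemma nonneg_comb_refl g a : g \in P -> a \in rs -> a != g ->
  nonneg_comb P a -> nonneg_comb P (refl g a).
Proof.
move=> /(nthP 0) [j j_lt <-] ar a_neq [c ec].
have [c' [ec' _]] := refl_simple_nonneg_comb (j := Ordinal j_lt) ar ec a_neq.
by exists c'.
Qed.

End Base.

Section Koszul.
Variable ts : seq 'rV[R]_n.

Lemma rootsHN a : a \in rs -> (- a \in rootsH rs ts) = (a \in rootsH rs ts).
Proof.
move=> ar; rewrite !mem_filter ar rootN // !andbT.
by apply: eq_all => t; rewrite dotNl oppr_eq0.
Qed.

Lemma rootsH_refl g a : g \in rootsH rs ts -> a \in rs ->
  (refl g a \in rootsH rs ts) = (a \in rootsH rs ts).
Proof.
rewrite mem_filter => /andP [/allP g_ts gr] ar.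
rewrite !mem_filter ar root_refl // !andbT; apply: eq_in_all => t /g_ts /eqP gt0.
by rewrite /refl dotBl dotZl gt0 mulr0 subr0.
Qed.

Local Notation koszul_root P a := (positive P a && (a \notin rootsH rs ts))%R.

Section KoszulForm.
Variable P : seq 'rV[R]_n.
Hypothesis P_base : is_base P rs.

Lemma koszul_root_refl g a : g \in P -> g \in rootsH rs ts -> a \in rs ->
  koszul_root P (refl g a) = koszul_root P a.
Proof.
move=> gP gH ar; rewrite rootsH_refl //.
have [aH|aH] := boolP (a \in rootsH rs ts); first by rewrite !andbF.
have gr := base_sub P_base gP.
have a_neq : a != g by apply: contraNneq aH => ->.
have Na_neq : - a != g by apply: contraNneq aH => Na_g; rewrite -rootsHN // Na_g.
rewrite !andbT; have [/asboolP a_pos | a_neg] := boolP (positive P a).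
  exact/asboolP/(nonneg_comb_refl P_base gP ar a_neq a_pos).
have /(nonneg_comb_refl P_base gP (rootN ar) Na_neq) : nonneg_comb P (- a).
  by apply/asboolP; rewrite nonneg_combN.
by rewrite reflN => /asboolP; rewrite nonneg_combN ?root_refl // => /negbTE.
Qed.

Lemma koszul_form_refl g : g \in P -> g \in rootsH rs ts ->
  refl g (koszul_form rs ts P) = koszul_form rs ts P.
Proof.
move=> gP gH; have gr := base_sub P_base gP; have g_neq0 := root_neq0 gr.
have sigma_refl : koszul_form rs ts P = \sum_(a <- rs | koszul_root P a) refl g a.
  have refl_rs : {in rs, forall a, refl g a \in rs} by move=> a; apply: root_refl.
  have reflK_rs : {in rs, involutive (refl g)} by move=> a _; apply: reflK.
  rewrite /koszul_form (big_uniq_involution _ _ root_uniq refl_rs reflK_rs).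
  rewrite big_seq_cond [RHS]big_seq_cond; apply: eq_bigl => a.
  by have [ar|] := boolP (a \in rs); rewrite ?andFb ?koszul_root_refl.
by rewrite {2}sigma_refl -refl_sum.
Qed.

Lemma cartan_koszul_rootsH g : g \in P -> g \in rootsH rs ts ->
  cartan (koszul_form rs ts P) g = 0.
Proof.
move=> gP gH; apply: refl_fixed (koszul_form_refl gP gH).
exact/root_neq0/(base_sub P_base).
Qed.

Lemma koszul_even_roots : all_koszul_even rs ts P ->
  forall a, a \in rs -> is_evenR (cartan (koszul_form rs ts P) a).
Proof.
move=> P_even; apply: (base_even_cartan P_base) => b bP.
have [bH|] := boolP (b \in rootsH rs ts); last exact: P_even.
by rewrite cartan_koszul_rootsH //; apply: is_evenR0.
Qed.

End KoszulForm.

(* The positive roots outside [R_H] for [P'] are those for [P], except that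
   the ones negative for [P'] are replaced by their opposites. *)
Lemma koszul_form_diff P P' : is_base P rs -> is_base P' rs ->
  koszul_form rs ts P - koszul_form rs ts P' =
  (\sum_(a <- rs | koszul_root P a && ~~ positive P' a) a) *+ 2.
Proof.
move=> P_base P'_base; rewrite /koszul_form.
rewrite (bigID (fun a => positive P' a)) [X in _ - X](bigID (fun a => positive P a)) /=.
set A := \sum_(a <- rs | koszul_root P a && ~~ positive P' a) a.
have common : \sum_(a <- rs | koszul_root P a && positive P' a) a =
              \sum_(a <- rs | koszul_root P' a && positive P a) a.
  apply: eq_bigl => a.
  by case: (positive P a); case: (positive P' a); case: (a \in rootsH rs ts).
have opp : \sum_(a <- rs | koszul_root P' a && ~~ positive P a) a = - A.
  have NK : {in rs, involutive -%R} by move=> a _; apply: opprK.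
  rewrite (big_uniq_involution _ _ root_uniq (fun a => @rootN a) NK).
  rewrite /A big_seq_cond [in RHS]big_seq_cond -sumrN; apply: eq_bigl => a.
  have [ar|] := boolP (a \in rs); rewrite ?andFb //=.
  rewrite (nonneg_combN P_base ar) (nonneg_combN P'_base ar) rootsHN //.
  by case: (positive P a); case: (positive P' a); case: (a \in rootsH rs ts).
by rewrite common opp opprD opprK addrACA subrr add0r mulr2n.
Qed.

Lemma koszul_form_diff_even P P' b : is_base P rs -> is_base P' rs -> b \in rs ->
  is_evenR (cartan (koszul_form rs ts P) b - cartan (koszul_form rs ts P') b).
Proof.
move=> P_base P'_base br; rewrite -cartanBl koszul_form_diff // mulr2n cartanDl.
rewrite cartan_suml big_seq_cond; apply/is_evenR_double/is_intR_sum.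
by move=> a /andP [ar _]; apply: root_cartan_int.
Qed.

Lemma all_koszul_even_transfer P P' : is_base P rs -> is_base P' rs ->
  all_koszul_even rs ts P -> all_koszul_even rs ts P'.
Proof.
move=> P_base P'_base P_even b bP' _; have br := base_sub P'_base bP'.
have := is_evenRB (koszul_even_roots P_base P_even br)
                  (koszul_form_diff_even P_base P'_base br).
by rewrite opprB addrC subrK.
Qed.

End Koszul.
End RootSystem.

Theorem mainTheorem16 (R : realType) (n : nat) (rs ts P P' : seq 'rV[R]_n) :
  root_system rs ->
  inv_cx_structure rs ts P ->
  inv_cx_structure rs ts P' ->
  (all_koszul_even rs ts P <-> all_koszul_even rs ts P').
Proof.
by move=> rs_root [P_base _] [P'_base _]; split; apply: all_koszul_even_transfer.
Qed.
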